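(* Let $k\in\mathbb{Z}$ and $z\in\mathbb{C}$ with $|z|>e$. Then $$|W_k'(z)| \le \frac{1}{|z|}\frac{W_0(|z|)}{W_0(|z|)-1}.$$
   Context: $W_k$ denotes the $k$-th branch of the Lambert $W$ function (inverse of $w\mapsto we^w$) in the standard convention of Corless, Gonnet, Hare, Jeffrey and Knuth (1996); $W_0$ is the principal branch, real and increasing on $[-1/e,\infty)$. On a branch cut, values are defined by continuity from the upper half plane and $W_k'$ denotes the derivative of the fixed branch $W_k$ (directional derivative along the cut there). *)

From Stdlib Require Import Reals ZArith ClassicalEpsilon.
From Coquelicot Require Import Coquelicot.
Open Scope R_scope.

Definition Cexp (w : C) : C := (exp (Re w) * cos (Im w), exp (Re w) * sin (Im w)).

Definition is_Arg (w : C) (th : R) : Prop :=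
  - PI < th <= PI /\ w = (Cmod w * cos th, Cmod w * sin th).

(** Branch relation: w e^w = z and w + Log w = Log z + 2 pi i k
    (Log = principal logarithm, arguments in (-pi, pi]).  For z off
    {0} and off [-1/e,0) this singles out exactly W_k(z) in the
    convention of Corless et al. (1996), with counterclockwise continuity
    on the branch cuts (Jeffrey-Hare-Corless, "Unwinding the branches of
    the Lambert W function", 1996). *)
Definition LambertW_rel (k : Z) (z w : C) : Prop :=
  Cmult w (Cexp w) = z /\
  exists a b : R, is_Arg w a /\ is_Arg z b /\ Im w + a = b + 2 * PI * IZR k.

Definition LambertW (k : Z) (z : C) : C :=
  epsilon (inhabits (RtoC 0)) (LambertW_rel k z).

Definition W0R (x : R) : R :=
  epsilon (inhabits 0) (fun w => -1 <= w /\ w * exp w = x).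

Definition on_neg_real_axis (z : C) : Prop := Im z = 0 /\ Re z < 0.

Definition LambertW_deriv (k : Z) (z d : C) : Prop :=
  (on_neg_real_axis z ->
     is_derive (K := R_AbsRing) (fun t : R => LambertW k (Cplus z (RtoC t))) 0 d) /\
  (~ on_neg_real_axis z ->
     is_derive (K := C_AbsRing) (V := C_NormedModule) (LambertW k) z d).

(* Taking logarithms in w e^w = z, the branch value w = W_k(z) is the solution of
   w + Log w = ln|z| + i (Arg z + 2 pi k), Log being the principal logarithm.  For A > 1 the
   equation w + Log w = A + iB has exactly one solution, depending continuously on (A, B):
   for B > 0, with t = Arg w, it is w = ((B - t) cot t, B - t) where t is the zero of the
   strictly decreasing function t |-> Phi B t - A; B < 0 follows by conjugation and B = 0
   gives a positive real w.  As Arg is continuous off the cut and constant along it, W_k is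
   continuous at z (along the cut if z lies on it), and as a continuous inverse of w |-> w e^w
   it has derivative 1 / ((1 + w) e^w).  Finally |z| = |w| e^(Re w) <= |w| e^|w| forces
   |w| >= W_0(|z|) > 1, whence
   |W_k'(z)| = |w| / (|z| |1 + w|) <= |w| / (|z| (|w| - 1)) <= W_0(|z|) / (|z| (W_0(|z|) - 1)). *)

From Stdlib Require Import Reals ZArith Lra Lia Psatz ClassicalEpsilon.
From Coquelicot Require Import Coquelicot.
Open Scope R_scope.

Lemma Cmod_polar r t : 0 <= r -> Cmod (r * cos t, r * sin t) = r.
Proof.
  intros Hr. unfold Cmod; cbn [fst snd].
  rewrite <- (sqrt_pow2 r Hr). f_equal.
  pose proof (sin2_cos2 t) as SC. unfold Rsqr in SC. rewrite sqrt_pow2 by lra. nra.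
Qed.

Lemma Cmod_Cexp w : Cmod (Cexp w) = exp (Re w).
Proof. apply Cmod_polar. left; apply exp_pos. Qed.

Lemma Cexp_add u v : Cexp (u + v)%C = (Cexp u * Cexp v)%C.
Proof.
  destruct u as [a b], v as [c d]. unfold Cexp, Cplus, Cmult, Re, Im; cbn [fst snd].
  rewrite exp_plus, cos_plus, sin_plus. f_equal; ring.
Qed.

Lemma im_le_Cmod c : Rabs (Im c) <= Cmod c.
Proof.
  pose proof (Rmax_Cmod c). pose proof (Rmax_r (Rabs (fst c)) (Rabs (snd c))). unfold Im; lra.
Qed.

Lemma Cmod_le_re_im c : Cmod c <= Rabs (Re c) + Rabs (Im c).
Proof.
  destruct c as [x y]. unfold Cmod, Re, Im; cbn [fst snd].
  pose proof (Rabs_pos x); pose proof (Rabs_pos y).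
  rewrite <- (sqrt_pow2 (Rabs x + Rabs y)) by lra.
  apply sqrt_le_1_alt. rewrite <- (pow2_abs x), <- (pow2_abs y). nra.
Qed.

Lemma Cmod_triangle_inv2 a b : Rabs (Cmod a - Cmod b) <= Cmod (a - b).
Proof.
  apply Rabs_le_between. split.
  - pose proof (Cmod_triangle (b - a) a) as H.
    replace (b - a + a)%C with b in H by ring.
    replace (b - a)%C with (- (a - b))%C in H by ring. rewrite Cmod_opp in H. lra.
  - pose proof (Cmod_triangle (a - b) b) as H.
    replace (a - b + b)%C with a in H by ring. lra.
Qed.

Lemma Cmod_1_plus_ge w : Cmod w - 1 <= Cmod (1 + w).
Proof.
  pose proof (Cmod_triangle (1 + w) (Copp 1)) as H.
  replace (1 + w + Copp 1)%C with w in H by ring. rewrite Cmod_opp, Cmod_1 in H. lra.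
Qed.

Lemma cos_sin_add_2PI_IZR x k :
  cos (x + 2 * PI * IZR k) = cos x /\ sin (x + 2 * PI * IZR k) = sin x.
Proof.
  destruct (Z_le_gt_dec 0 k) as [Hk | Hk].
  - rewrite <- (Z2Nat.id k Hk), <- INR_IZR_INZ.
    replace (2 * PI * INR (Z.to_nat k)) with (2 * INR (Z.to_nat k) * PI) by ring.
    split; [apply cos_period | apply sin_period].
  - set (n := Z.to_nat (- k)).
    assert (Ek : IZR k = - INR n).
    { unfold n. rewrite INR_IZR_INZ, Z2Nat.id by lia. rewrite opp_IZR. ring. }
    rewrite Ek. set (y := x + 2 * PI * - INR n).
    replace x with (y + 2 * INR n * PI) by (unfold y; ring).
    rewrite cos_period, sin_period. auto.
Qed.

Lemma ln_le_sub_1 r : 0 < r -> ln r <= r - 1.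
Proof. intros Hr. pose proof (exp_ineq1_le (ln r)) as H. rewrite exp_ln in H; lra. Qed.

Lemma ln_gt_1 x : exp 1 < x -> 1 < ln x.
Proof. intros Hx. rewrite <- (ln_exp 1). apply ln_increasing; [apply exp_pos | exact Hx]. Qed.

Lemma id_mul_exp_increasing s t : 0 <= s -> s < t -> s * exp s < t * exp t.
Proof. intros Hs Hst. pose proof (exp_increasing s t Hst). pose proof (exp_pos s). nra. Qed.

Lemma id_plus_ln_expansive r r0 : 0 < r -> 0 < r0 ->
  Rabs (r - r0) <= Rabs ((r + ln r) - (r0 + ln r0)).
Proof.
  intros Hr Hr0. destruct (Rtotal_order r r0) as [H | [-> | H]].
  - pose proof (ln_increasing r r0 Hr H). rewrite !Rabs_left; lra.
  - rewrite !Rminus_diag, Rabs_R0. lra.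
  - pose proof (ln_increasing r0 r Hr0 H). rewrite !Rabs_pos_eq; lra.
Qed.

Lemma Rabs_sin_le x : Rabs (sin x) <= Rabs x.
Proof.
  pose proof (bounded_variation sin cos 1 0 x) as H.
  rewrite sin_0, !Rminus_0_r, Rmult_1_l in H. apply H.
  intros t _. split; [apply is_derive_sin | apply Rabs_le_between, COS_bound].
Qed.

Lemma cos_lower_bound x : 1 - x ^ 2 / 2 <= cos x.
Proof.
  replace x with (2 * (x / 2)) at 2 by field. rewrite cos_2a_sin.
  pose proof (Rabs_sin_le (x / 2)) as H. apply Rsqr_le_abs_1 in H. unfold Rsqr in H. lra.
Qed.

Lemma sin_ge_third x : 0 <= x <= PI / 2 -> x / 3 <= sin x.
Proof.
  intros H. pose proof PI_4. pose proof PI_RGT_0.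
  destruct (sin_bound x 0) as [Hlb _]; try lra.
  replace (sin_approx x (2 * 0 + 1)) with (x - x ^ 3 / 6) in Hlb
    by (unfold sin_approx, sin_term; simpl; field).
  nra.
Qed.

Lemma Cmod_cis_sub_1 a : Cmod (cos a - 1, sin a) <= Rabs a.
Proof.
  unfold Cmod; cbn [fst snd]. rewrite <- sqrt_Rsqr_abs. apply sqrt_le_1_alt.
  pose proof (sin2_cos2 a) as SC. pose proof (cos_lower_bound a). unfold Rsqr in *. nra.
Qed.

Lemma exp_sub_1_le t : Rabs t <= 1 -> Rabs (exp t - 1) <= 3 * Rabs t.
Proof.
  intros Ht. pose proof (bounded_variation exp exp 3 0 t) as H.
  rewrite exp_0, !Rminus_0_r in H. apply H.
  intros s Hs. split; [apply is_derive_exp |].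
  rewrite Rabs_pos_eq by (left; apply exp_pos).
  apply Rle_trans with (exp 1); [| apply exp_le_3].
  rewrite Rminus_0_r in Hs. apply Rabs_le_between in Hs.
  destruct (Req_dec s 1) as [-> | Hne]; [lra |]. left. apply exp_increasing. lra.
Qed.

Lemma exp_sub_1_sub_le t : Rabs t <= 1 -> Rabs (exp t - 1 - t) <= 3 * t ^ 2.
Proof.
  intros Ht.
  pose proof (bounded_variation (fun x => exp x - x) (fun x => exp x - 1) (3 * Rabs t) 0 t) as H.
  cbv beta in H. rewrite exp_0, !Rminus_0_r in H. rewrite <- (pow2_abs t).
  replace (exp t - 1 - t) with (exp t - t - 1) by ring.
  replace (Rabs t ^ 2) with (Rabs t * Rabs t) by ring.
  rewrite <- Rmult_assoc. apply H.
  intros s Hs. rewrite Rminus_0_r in Hs. split; [auto_derive; auto; ring |].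
  eapply Rle_trans; [apply exp_sub_1_le; lra |]. lra.
Qed.

Lemma sin_sub_le t : Rabs t <= 1 -> Rabs (sin t - t) <= t ^ 2.
Proof.
  intros Ht.
  pose proof (bounded_variation (fun x => sin x - x) (fun x => cos x - 1) (Rabs t) 0 t) as H.
  cbv beta in H. rewrite sin_0, !Rminus_0_r in H. rewrite <- (pow2_abs t).
  replace (Rabs t ^ 2) with (Rabs t * Rabs t) by ring. apply H.
  intros s Hs. rewrite Rminus_0_r in Hs. split; [auto_derive; auto; ring |].
  pose proof (cos_lower_bound s). pose proof (COS_bound s). pose proof (Rabs_pos s).
  rewrite Rabs_left1 by lra. rewrite <- (pow2_abs s) in *. nra.
Qed.

Lemma Cexp_sub_1_sub_le u : Cmod u <= 1 -> Cmod (Cexp u - 1 - u) <= 8 * Cmod u ^ 2.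
Proof.
  intros Hu. pose proof (re_le_Cmod u) as Ha. pose proof (im_le_Cmod u) as Hb.
  destruct u as [a b]. unfold Re, Im in Ha, Hb; cbn [fst snd] in Ha, Hb.
  set (m := Cmod (a, b)) in *.
  eapply Rle_trans; [apply Cmod_le_re_im |].
  unfold Cexp, Cminus, Cplus, Copp, RtoC, Re, Im; cbn [fst snd].
  replace (exp a * cos b + - (1) + - a)
    with ((exp a - 1 - a) * cos b + (1 + a) * (cos b - 1)) by ring.
  replace (exp a * sin b + - 0 + - b) with ((exp a - 1) * sin b + (sin b - b)) by ring.
  pose proof (exp_sub_1_sub_le a ltac:(lra)). pose proof (exp_sub_1_le a ltac:(lra)).
  pose proof (sin_sub_le b ltac:(lra)). pose proof (cos_lower_bound b). pose proof (COS_bound b).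
  pose proof (Rabs_sin_le b). pose proof (Rabs_pos a). pose proof (Rabs_pos b).
  assert (a ^ 2 <= m ^ 2) by (rewrite <- (pow2_abs a); nra).
  assert (b ^ 2 <= m ^ 2) by (rewrite <- (pow2_abs b); nra).
  assert (Re_le : Rabs ((exp a - 1 - a) * cos b + (1 + a) * (cos b - 1)) <= 4 * m ^ 2).
  { eapply Rle_trans; [apply Rabs_triang |]. rewrite !Rabs_mult.
    assert (Rabs (cos b) <= 1) by (apply Rabs_le_between; lra).
    assert (Rabs (1 + a) <= 2) by (apply Rabs_le_between; apply Rabs_le_between in Ha; lra).
    assert (Rabs (cos b - 1) <= b ^ 2 / 2) by (apply Rabs_le_between; split; nra).
    pose proof (Rabs_pos (exp a - 1 - a)). pose proof (Rabs_pos (cos b)).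
    pose proof (Rabs_pos (1 + a)). pose proof (Rabs_pos (cos b - 1)). nra. }
  assert (Im_le : Rabs ((exp a - 1) * sin b + (sin b - b)) <= 4 * m ^ 2).
  { eapply Rle_trans; [apply Rabs_triang |]. rewrite !Rabs_mult.
    pose proof (Rabs_pos (exp a - 1)). pose proof (Rabs_pos (sin b)).
    assert (Rabs (exp a - 1) * Rabs (sin b) <= 3 * Rabs a * Rabs b)
      by (apply Rmult_le_compat; auto; lra).
    nra. }
  lra.
Qed.

Lemma is_derive_continuity_pt f x l : is_derive f x l -> continuity_pt f x.
Proof. intros H. apply derivable_continuous_pt. exists l. now apply is_derive_Reals. Qed.

Lemma continuity_pt_eps f x : continuity_pt f x -> forall eps, 0 < eps ->
  exists del, 0 < del /\ forall y, Rabs (y - x) < del -> Rabs (f y - f x) < eps.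
Proof.
  intros H eps He. destruct (H eps He) as [del [Hdel Hf]]. exists del. split; auto.
  intros y Hy. destruct (Req_dec y x) as [-> | Hyx].
  - now rewrite Rminus_eq_0, Rabs_R0.
  - apply (Hf y). repeat split; auto.
Qed.

Lemma locally_2d_ball x y d : 0 < d ->
  locally_2d (fun u v => Rabs (u - x) < d /\ Rabs (v - y) < d) x y.
Proof. intros Hd. now exists (mkposreal d Hd). Qed.

Lemma locally_2d_opp_snd P x y : locally_2d P x (- y) -> locally_2d (fun u v => P u (- v)) x y.
Proof.
  intros [d Hd]. exists d. intros u v Hu Hv. apply Hd; auto.
  now replace (- v - - y) with (- (v - y)) by ring; rewrite Rabs_Ropp.
Qed.

Lemma is_Arg_Re_Im w a : is_Arg w a -> Re w = Cmod w * cos a /\ Im w = Cmod w * sin a.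
Proof. intros [_ Ew]. set (r := Cmod w) in Ew |- *. clearbody r. now rewrite Ew. Qed.

Lemma Cmod_unit b : Cmod (cos b, sin b) = 1.
Proof. rewrite <- (Rmult_1_l (cos b)), <- (Rmult_1_l (sin b)). apply Cmod_polar; lra. Qed.

Lemma Cmult_unit_inv_l u b : ((u * (cos (- b), sin (- b))) * (cos b, sin b))%C = u.
Proof.
  destruct u as [x y]. rewrite cos_neg, sin_neg. unfold Cmult; cbn [fst snd].
  pose proof (sin2_cos2 b) as SC. unfold Rsqr in SC.
  f_equal; [transitivity (x * (sin b * sin b + cos b * cos b))
          | transitivity (y * (sin b * sin b + cos b * cos b))];
    solve [ring | rewrite SC; ring].
Qed.

Lemma sin_lt_0_Arg a : - PI < a <= PI -> sin a < 0 -> a < 0.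
Proof.
  intros Ha Hs. destruct (Rlt_le_dec a 0) as [H | H]; auto.
  pose proof (sin_ge_0 a H (proj2 Ha)). lra.
Qed.

Lemma sin_nonneg_Arg a : - PI < a <= PI -> 0 <= sin a -> 0 <= a.
Proof.
  intros Ha Hs. destruct (Rlt_le_dec 0 a) as [H | H]; [lra |].
  destruct H as [H | ->]; [| lra]. pose proof (sin_lt_0_var a (proj1 Ha) H). lra.
Qed.

Lemma is_Arg_unique w a a' : 0 < Cmod w -> is_Arg w a -> is_Arg w a' -> a = a'.
Proof.
  intros Hw Ha Ha'.
  destruct (is_Arg_Re_Im w a Ha) as [E1 E2], (is_Arg_Re_Im w a' Ha') as [E3 E4].
  assert (Hc : cos a = cos a') by (apply (Rmult_eq_reg_l (Cmod w)); lra).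
  assert (Hs : sin a = sin a') by (apply (Rmult_eq_reg_l (Cmod w)); lra).
  destruct Ha as [Ra _], Ha' as [Ra' _].
  destruct (Rlt_le_dec (sin a) 0) as [Hneg | Hnneg].
  - pose proof (sin_lt_0_Arg a Ra Hneg). pose proof (sin_lt_0_Arg a' Ra' ltac:(lra)).
    enough (- a = - a') by lra.
    apply cos_inj; try lra. now rewrite !cos_neg.
  - pose proof (sin_nonneg_Arg a Ra Hnneg). pose proof (sin_nonneg_Arg a' Ra' ltac:(lra)).
    apply cos_inj; lra.
Qed.

Lemma is_Arg_atan u : 0 < Re u -> is_Arg u (atan (Im u / Re u)).
Proof.
  destruct u as [x y]. unfold Re, Im; cbn [fst snd]. intros Hx.
  pose proof (atan_bound (y / x)). pose proof PI_RGT_0.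
  split; [lra |].
  rewrite cos_atan, sin_atan.
  assert (Hs : 0 < sqrt (1 + (y / x)²)).
  { apply sqrt_lt_R0. pose proof (Rle_0_sqr (y / x)). lra. }
  assert (Hm : Cmod (x, y) = x * sqrt (1 + (y / x)²)).
  { unfold Cmod; cbn [fst snd]. rewrite <- (sqrt_pow2 x) at 2 by lra.
    rewrite <- sqrt_mult by (pose proof (Rle_0_sqr (y / x)); nra).
    f_equal. unfold Rsqr. field. lra. }
  rewrite Hm. f_equal; field; lra.
Qed.

Lemma is_Arg_mul_unit u c b : is_Arg u c -> - PI < c + b <= PI ->
  is_Arg (u * (cos b, sin b))%C (c + b).
Proof.
  intros Hu Hcb. destruct (is_Arg_Re_Im u c Hu) as [E1 E2].
  split; auto.
  rewrite Cmod_mult, Cmod_unit, Rmult_1_r.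
  destruct u as [x y]. unfold Re, Im in E1, E2; cbn [fst snd] in E1, E2.
  set (r := Cmod (x, y)) in *. clearbody r. subst x y.
  unfold Cmult; cbn [fst snd]. rewrite cos_plus, sin_plus. f_equal; ring.
Qed.

Lemma is_Arg_rotate u b c : is_Arg (u * (cos (- b), sin (- b)))%C c -> - PI < c + b <= PI ->
  is_Arg u (c + b).
Proof. intros Hc Hcb. rewrite <- (Cmult_unit_inv_l u b). now apply is_Arg_mul_unit. Qed.

Lemma is_Arg_neg_real z : Im z = 0 -> Re z < 0 -> is_Arg z PI.
Proof.
  destruct z as [x y]. unfold Re, Im; cbn [fst snd]. intros -> Hx.
  pose proof PI_RGT_0. split; [lra |].
  assert (Cmod (x, 0) = - x) as ->.
  { rewrite <- Cmod_opp. replace (- (x, 0))%C with ((- x) * cos 0, (- x) * sin 0).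
    - apply Cmod_polar; lra.
    - rewrite cos_0, sin_0. unfold Copp; cbn [fst snd]. f_equal; ring. }
  rewrite cos_PI, sin_PI. f_equal; ring.
Qed.

Lemma is_Arg_PI_on_neg_real_axis z : 0 < Cmod z -> is_Arg z PI -> on_neg_real_axis z.
Proof.
  intros Hz Hpi. destruct (is_Arg_Re_Im z PI Hpi) as [E1 E2].
  rewrite cos_PI in E1. rewrite sin_PI in E2. split; lra.
Qed.

Lemma is_Arg_exists z : 0 < Cmod z -> exists b, is_Arg z b.
Proof.
  intros Hz. pose proof PI_RGT_0.
  destruct z as [x y].
  destruct (Rlt_le_dec 0 x) as [Hx | Hx].
  { exists (atan (y / x)). now apply (is_Arg_atan (x, y)). }
  destruct (Rtotal_order y 0) as [Hy | [Hy | Hy]].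
  - set (u := ((x, y) * (cos (- - (PI / 2)), sin (- - (PI / 2))))%C).
    assert (Hu : 0 < Re u).
    { unfold u, Re, Cmult. rewrite Ropp_involutive, cos_PI2, sin_PI2; cbn [fst snd]. lra. }
    pose proof (atan_bound (Im u / Re u)).
    exists (atan (Im u / Re u) + - (PI / 2)).
    apply is_Arg_rotate; [now apply is_Arg_atan | lra].
  - subst y. exists PI. apply is_Arg_neg_real; unfold Re, Im; cbn [fst snd]; [reflexivity |].
    destruct Hx as [Hx | Hx]; [lra |]. subst x.
    change (0, 0) with (RtoC 0) in Hz. rewrite Cmod_0 in Hz. lra.
  - set (u := ((x, y) * (cos (- (PI / 2)), sin (- (PI / 2))))%C).
    assert (Hu : 0 < Re u).
    { unfold u, Re, Cmult. rewrite cos_neg, sin_neg, cos_PI2, sin_PI2; cbn [fst snd]. lra. }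
    pose proof (atan_bound (Im u / Re u)).
    exists (atan (Im u / Re u) + PI / 2).
    apply is_Arg_rotate; [now apply is_Arg_atan | lra].
Qed.

Lemma Cmult_Arg_unit_inv w a : is_Arg w a -> (w * (cos (- a), sin (- a)))%C = RtoC (Cmod w).
Proof.
  intros [_ Ew]. set (r := Cmod w) in Ew |- *. clearbody r. subst w.
  pose proof (sin2_cos2 a) as SC. unfold Rsqr in SC.
  unfold Cmult, RtoC; cbn [fst snd]. rewrite cos_neg, sin_neg.
  f_equal; [transitivity (r * (sin a * sin a + cos a * cos a)); [ring | rewrite SC; ring] | ring].
Qed.

Lemma is_Arg_near_pos_real u rho e : 0 < rho -> 0 < e < PI / 2 ->
  Cmod (u - rho) < Rmin (rho / 2) (rho * tan e / 2) -> exists c, is_Arg u c /\ Rabs c < e.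
Proof.
  intros Hrho He Hu.
  assert (Ht : 0 < tan e) by (apply tan_gt_0; lra).
  pose proof (re_le_Cmod (u - rho)) as Hre. pose proof (im_le_Cmod (u - rho)) as Him.
  replace (Re (u - rho)%C) with (Re u - rho) in Hre by (unfold Re; simpl; ring).
  replace (Im (u - rho)%C) with (Im u) in Him by (unfold Im; simpl; ring).
  apply Rabs_le_between in Hre, Him.
  pose proof (Rmin_l (rho / 2) (rho * tan e / 2)). pose proof (Rmin_r (rho / 2) (rho * tan e / 2)).
  assert (Hx : rho / 2 < Re u) by lra.
  assert (Hq : - tan e < Im u / Re u < tan e).
  { split; apply (Rmult_lt_reg_r (Re u)); try lra; unfold Rdiv;
      rewrite Rmult_assoc, Rinv_l, Rmult_1_r by lra; nra. }
  exists (atan (Im u / Re u)). split; [apply is_Arg_atan; lra |].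
  apply Rabs_lt_between. rewrite <- (atan_tan e), <- atan_opp by lra.
  split; apply atan_increasing; lra.
Qed.

Definition Arg_continuous_within (S : C -> Prop) (z0 : C) (b0 : R) : Prop :=
  forall eta, 0 < eta -> exists del, 0 < del /\ forall z,
    S z -> Cmod (z - z0) < del -> exists b, is_Arg z b /\ Rabs (b - b0) < eta.

Lemma is_Arg_continuous z0 b0 : 0 < Cmod z0 -> is_Arg z0 b0 -> b0 <> PI ->
  Arg_continuous_within (fun _ => True) z0 b0.
Proof.
  intros Hz0 Hb0 Hpi eta Heta. pose proof PI2_1. pose proof (proj1 Hb0) as Rb0.
  set (e := Rmin (Rmin eta 1) (Rmin (PI - b0) (PI + b0))).
  assert (He : 0 < e <= Rmin eta 1 /\ e <= PI - b0 /\ e <= PI + b0).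
  { unfold e, Rmin. repeat destruct Rle_dec; lra. }
  assert (Hle : e <= eta /\ e < PI / 2) by (unfold Rmin in He; destruct Rle_dec; lra).
  assert (Ht : 0 < tan e) by (apply tan_gt_0; lra).
  exists (Rmin (Cmod z0 / 2) (Cmod z0 * tan e / 2)). split.
  { apply Rmin_glb_lt; [lra |]. apply Rmult_lt_0_compat; [nra | lra]. }
  intros z _ Hz.
  destruct (is_Arg_near_pos_real (z * (cos (- b0), sin (- b0))) (Cmod z0) e) as [c [Hc Hce]];
    [lra | lra | | ].
  { rewrite <- (Cmult_Arg_unit_inv z0 b0 Hb0).
    replace (z * (cos (- b0), sin (- b0)) - z0 * (cos (- b0), sin (- b0)))%C
      with ((z - z0) * (cos (- b0), sin (- b0)))%C by ring.
    now rewrite Cmod_mult, Cmod_unit, Rmult_1_r. }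
  apply Rabs_lt_between in Hce.
  exists (c + b0). split.
  - apply is_Arg_rotate; auto. lra.
  - replace (c + b0 - b0) with c by ring. apply Rabs_lt_between. lra.
Qed.

Lemma Arg_continuous_within_neg_real_axis z : Arg_continuous_within on_neg_real_axis z PI.
Proof.
  intros eta Heta. exists 1. split; [lra |]. intros z' [Him Hre] _. exists PI.
  split; [now apply is_Arg_neg_real |]. rewrite Rminus_diag, Rabs_R0. exact Heta.
Qed.

Definition log_lambert (A B : R) (w : C) : Prop :=
  0 < Cmod w /\ Re w + ln (Cmod w) = A /\ exists a, is_Arg w a /\ Im w + a = B.

Lemma LambertW_rel_iff k z b w : 0 < Cmod z -> is_Arg z b ->
  LambertW_rel k z w <-> log_lambert (ln (Cmod z)) (b + 2 * PI * IZR k) w.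
Proof.
  intros Hz Hb. split.
  - intros [Hm [a [b' [Ha [Hb' HI]]]]].
    rewrite (is_Arg_unique z b' b Hz Hb' Hb) in HI.
    assert (Em : Cmod z = Cmod w * exp (Re w))
      by (rewrite <- Hm, Cmod_mult, Cmod_Cexp; reflexivity).
    assert (Hw : 0 < Cmod w).
    { destruct (Cmod_ge_0 w) as [H | H]; auto. rewrite <- H, Rmult_0_l in Em. lra. }
    split; [exact Hw | split; [| now exists a]].
    rewrite Em, ln_mult, ln_exp by (auto; apply exp_pos). ring.
  - intros [Hw [HE [a [Ha HI]]]]. split; [| now exists a, b].
    assert (Hexp : Cmod z = Cmod w * exp (Re w)).
    { rewrite <- (exp_ln (Cmod w)) at 1 by exact Hw.
      now rewrite <- exp_plus, Rplus_comm, HE, exp_ln. }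
    destruct (cos_sin_add_2PI_IZR b k) as [Hc Hs].
    destruct Hb as [_ Ez], Ha as [_ Ew].
    rewrite Ez, <- Hc, <- Hs, <- HI, Hexp.
    destruct w as [x y]. unfold Re, Im in *; cbn [fst snd] in *.
    set (r := Cmod (x, y)) in *. clearbody r. injection Ew as -> ->.
    unfold Cmult, Cexp, Re, Im; cbn [fst snd]. rewrite cos_plus, sin_plus. f_equal; ring.
Qed.

(* For B > 0, a solution w of argument t satisfies |w| sin t = B - t, so it must be
   w = ((B - t) cot t, B - t); [Phi B t] is then Re w + ln |w|. *)
Definition Phi (B t : R) := (B - t) * cos t / sin t + ln ((B - t) / sin t).

Lemma log_lambert_Phi B t : 0 < t < PI -> t < B ->
  log_lambert (Phi B t) B ((B - t) * cos t / sin t, B - t).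
Proof.
  intros Ht HtB. assert (Hs : 0 < sin t) by (apply sin_gt_0; lra).
  set (r := (B - t) / sin t).
  assert (Hr : 0 < r) by (apply Rdiv_lt_0_compat; lra).
  assert (Ew : ((B - t) * cos t / sin t, B - t) = (r * cos t, r * sin t))
    by (unfold r; f_equal; field; lra).
  rewrite Ew. unfold log_lambert. rewrite Cmod_polar by lra.
  repeat split; auto.
  - unfold Phi, Re; cbn [fst]. fold r. f_equal. unfold r. field. lra.
  - exists t. repeat split; try lra.
    + rewrite Cmod_polar by lra. reflexivity.
    + unfold Im, r; cbn [snd]. field. lra.
Qed.

Lemma log_lambert_pos_real r : 0 < r -> log_lambert (r + ln r) 0 (RtoC r).
Proof.
  intros Hr. unfold log_lambert. rewrite Cmod_R, Rabs_pos_eq by lra.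
  repeat split; auto. exists 0. pose proof PI_RGT_0. repeat split; try lra.
  - rewrite Cmod_R, Rabs_pos_eq, cos_0, sin_0 by lra. unfold RtoC. f_equal; ring.
  - unfold Im, RtoC; cbn [snd]. ring.
Qed.

Section LogLambert.

Variable A : R.

Hypothesis HA : 1 < A.

Lemma log_lambert_Arg_neq_PI B w a : log_lambert A B w -> is_Arg w a -> a <> PI.
Proof.
  intros [Hw [HE _]] Ha ->. destruct (is_Arg_Re_Im w PI Ha) as [E1 _].
  rewrite cos_PI in E1. pose proof (ln_le_sub_1 _ Hw). lra.
Qed.

Lemma log_lambert_conj B w : log_lambert A B w -> log_lambert A (- B) (Cconj w).
Proof.
  intros HS. pose proof HS as [Hw [HE [a [Ha HI]]]].
  pose proof (log_lambert_Arg_neq_PI B w a HS Ha) as Hpi. destruct Ha as [Ra Ew].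
  unfold log_lambert. rewrite Cmod_conj. repeat split; auto.
  exists (- a). unfold Im in *; cbn [Cconj snd]. split; [split |]; try lra.
  rewrite Cmod_conj, cos_neg, sin_neg. rewrite Ew at 1. unfold Cconj; cbn [fst snd]. f_equal; ring.
Qed.

Lemma log_lambert_Arg_le B w a : log_lambert A B w -> is_Arg w a -> Rabs a <= Rabs B.
Proof.
  intros HS Ha. pose proof HS as [Hw [_ [a' [Ha' HI]]]].
  rewrite <- (is_Arg_unique w a a' Hw Ha Ha') in HI.
  pose proof (log_lambert_Arg_neq_PI B w a HS Ha) as Hpi.
  destruct (is_Arg_Re_Im w a Ha) as [_ E2]. destruct Ha as [Ra _].
  destruct (Rtotal_order a 0) as [H | [-> | H]].
  - pose proof (sin_lt_0_var a ltac:(lra) H). rewrite !Rabs_left; nra.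
  - rewrite Rabs_R0. apply Rabs_pos.
  - pose proof (sin_gt_0 a H ltac:(lra)). rewrite !Rabs_pos_eq; nra.
Qed.

Lemma log_lambert_0_inv w : log_lambert A 0 w -> w = RtoC (Cmod w) /\ Cmod w + ln (Cmod w) = A.
Proof.
  intros HS. pose proof HS as [Hw [HE [a [Ha _]]]].
  pose proof (log_lambert_Arg_le 0 w a HS Ha) as Hle. rewrite Rabs_R0 in Hle.
  assert (a = 0) as -> by (apply Rabs_le_between in Hle; lra).
  destruct (is_Arg_Re_Im w 0 Ha) as [E1 E2].
  rewrite cos_0, Rmult_1_r in E1. rewrite sin_0, Rmult_0_r in E2.
  split; [| rewrite <- E1 at 1; exact HE].
  apply injective_projections; [exact E1 | exact E2].
Qed.

Lemma log_lambert_pos_inv B w : 0 < B -> log_lambert A B w ->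
  exists t, 0 < t < PI /\ t < B /\ Phi B t = A /\ w = ((B - t) * cos t / sin t, B - t).
Proof.
  intros HB HS. pose proof HS as [Hw [HE [a [Ha HI]]]].
  pose proof (log_lambert_Arg_neq_PI B w a HS Ha) as Hpi.
  destruct (is_Arg_Re_Im w a Ha) as [E1 E2]. destruct Ha as [Ra _].
  assert (Ha : 0 < a < PI).
  { split; [| lra]. destruct (Rlt_le_dec 0 a) as [H | H]; auto.
    assert (sin a <= 0)
      by (destruct H as [H | ->]; [pose proof (sin_lt_0_var a ltac:(lra) H) | rewrite sin_0]; lra).
    nra. }
  assert (Hs : 0 < sin a) by (apply sin_gt_0; lra).
  assert (Er : Cmod w = (B - a) / sin a) by (rewrite <- HI, E2; field; lra).
  assert (a < B) by (unfold Im in *; nra).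
  exists a. repeat split; try lra.
  - unfold Phi. rewrite <- Er.
    replace ((B - a) * cos a / sin a) with (Cmod w * cos a) by (rewrite Er; field; lra). lra.
  - apply injective_projections; cbn [fst snd].
    + change (fst w) with (Re w). rewrite E1, Er. field. lra.
    + change (snd w) with (Im w). lra.
Qed.

Lemma log_lambert_near_pos_real B w r0 : Rabs B <= 1 / 2 -> 0 < r0 -> log_lambert A B w ->
  Cmod (w - r0) <= Rabs (A - (r0 + ln r0)) + 3 * A * Rabs B.
Proof.
  intros HB Hr0 HS. pose proof HS as [Hw [HE [a [Ha _]]]].
  pose proof (log_lambert_Arg_le B w a HS Ha) as Hab. pose proof (Rabs_pos a).
  assert (Ha2 : a ^ 2 <= Rabs B * Rabs a) by (rewrite <- (pow2_abs a); nra).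
  destruct (is_Arg_Re_Im w a Ha) as [E1 _]. destruct Ha as [_ Ew].
  set (r := Cmod w) in *. clearbody r.
  pose proof (cos_lower_bound a) as Hcos. pose proof (COS_bound a).
  assert (Hr1 : 1 < r) by (pose proof (ln_le_sub_1 r Hw); nra).
  assert (0 < ln r) by (rewrite <- ln_1; apply ln_increasing; lra).
  assert (Hr : r < 2 * A) by (assert (1 / 2 <= cos a) by nra; nra).
  assert (Hgap : 0 <= r * (1 - cos a) <= A * Rabs B).
  { assert (r * (1 - cos a) <= r * (a ^ 2 / 2)) by (apply Rmult_le_compat_l; lra).
    assert (a ^ 2 <= Rabs B) by nra. split; nra. }
  assert (Hdr : Rabs (r - r0) <= Rabs (A - (r0 + ln r0)) + A * Rabs B).
  { eapply Rle_trans; [apply id_plus_ln_expansive; lra |].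
    replace (r + ln r - (r0 + ln r0)) with ((A - (r0 + ln r0)) + r * (1 - cos a)) by lra.
    eapply Rle_trans; [apply Rabs_triang |]. rewrite (Rabs_pos_eq (r * _)) by lra. lra. }
  assert (Hwr : Cmod (w - r) <= 2 * A * Rabs B).
  { replace (w - r)%C with (r * ((cos a - 1)%R, sin a))%C
      by (rewrite Ew; unfold Cminus, Cplus, Copp, Cmult, RtoC; cbn [fst snd]; f_equal; ring).
    rewrite Cmod_mult, Cmod_R, Rabs_pos_eq by lra.
    pose proof (Cmod_cis_sub_1 a). pose proof (Cmod_ge_0 (cos a - 1, sin a)). nra. }
  replace (w - r0)%C with ((w - r) + (r - r0))%C by ring.
  eapply Rle_trans; [apply Cmod_triangle |]. rewrite <- RtoC_minus, Cmod_R. lra.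
Qed.

End LogLambert.

Definition dPhi (B t : R) := - (2 * cos t / sin t + (B - t) / sin t ^ 2 + 1 / (B - t)).

Lemma Phi_derive B t : 0 < sin t -> t < B -> is_derive (Phi B) t (dPhi B t).
Proof.
  intros Hs Ht. unfold Phi, dPhi. auto_derive.
  - repeat split; try lra. apply Rdiv_lt_0_compat; lra.
  - pose proof (sin2_cos2 t) as SC. unfold Rsqr in SC. field_simplify; try lra.
    f_equal. replace (cos t ^ 2) with (1 - sin t ^ 2) by nra. ring.
Qed.

Lemma dPhi_lt_0 B t : 0 < sin t -> t < B -> dPhi B t < 0.
Proof.
  intros Hs Ht. unfold dPhi. pose proof (sin2_cos2 t) as SC. unfold Rsqr in SC.
  set (y := B - t). assert (Hy : 0 < y) by (unfold y; lra). clearbody y.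
  set (s := sin t) in *. set (c := cos t) in *. clearbody s c.
  enough (0 < ((y + c * s) ^ 2 + s ^ 4) / (y * s ^ 2)) as H.
  { replace (2 * c / s + y / s ^ 2 + 1 / y) with (((y + c * s) ^ 2 + s ^ 4) / (y * s ^ 2)); [lra |].
    field_simplify; try lra. f_equal.
    replace (c ^ 2) with (1 - s ^ 2) by (rewrite <- SC; ring). ring. }
  pose proof (pow_lt s 4 Hs). pose proof (pow_lt s 2 Hs). pose proof (pow2_ge_0 (y + c * s)).
  apply Rdiv_lt_0_compat; [lra | now apply Rmult_lt_0_compat].
Qed.

Lemma Phi_decreasing B s t : 0 < s -> s < t -> t < PI -> t < B -> Phi B t < Phi B s.
Proof.
  intros Hs Hst HtP HtB.
  enough (- Phi B s < - Phi B t) by lra.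
  assert (Hin : forall x, 0 < x -> x < Rmin PI B -> 0 < sin x /\ x < B).
  { intros x H1 H2. pose proof (Rmin_l PI B). pose proof (Rmin_r PI B).
    split; [apply sin_gt_0 |]; lra. }
  apply (incr_function (fun x => - Phi B x) (Finite 0) (Finite (Rmin PI B)) (fun x => - dPhi B x));
    simpl; try lra.
  - intros x H1 H2. destruct (Hin x H1 H2) as [Hsx HxB].
    exact (is_derive_opp (Phi B) x _ (Phi_derive B x Hsx HxB)).
  - intros x H1 H2. destruct (Hin x H1 H2). pose proof (dPhi_lt_0 B x). lra.
  - now apply Rmin_glb_lt.
Qed.

Lemma Phi_continuous_in_B t B0 : 0 < sin t -> t < B0 -> continuity_pt (fun B => Phi B t) B0.
Proof.
  intros Hs Ht. apply (is_derive_continuity_pt _ _ (cos t / sin t + 1 / (B0 - t))).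
  unfold Phi. auto_derive.
  - repeat split; try lra. apply Rdiv_lt_0_compat; lra.
  - field. lra.
Qed.

Lemma Phi_gt_near_0 A B : 1 < A -> 0 < B -> exists t, 0 < t <= PI / 3 /\ t < B / 2 /\ A < Phi B t.
Proof.
  intros HA HB. pose proof PI_RGT_0.
  set (t := Rmin (PI / 3) (B / (4 * A + 2))).
  assert (Ht : 0 < t <= PI / 3 /\ t <= B / (4 * A + 2)).
  { unfold t, Rmin. destruct Rle_dec; repeat split; try lra; apply Rdiv_lt_0_compat; lra. }
  assert (HtB : t * (4 * A + 2) <= B).
  { destruct Ht as [_ Htle]. apply (Rmult_le_compat_r (4 * A + 2)) in Htle; [| lra].
    unfold Rdiv in Htle. rewrite Rmult_assoc, Rinv_l, Rmult_1_r in Htle by lra. exact Htle. }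
  exists t. repeat split; try nra.
  assert (Hs : 0 < sin t) by (apply sin_gt_0; lra).
  pose proof (sin_lt_x t ltac:(lra)).
  assert (Hc : 1 / 2 <= cos t).
  { rewrite <- cos_PI3. destruct (Req_dec t (PI / 3)) as [-> | Hne]; [lra |].
    left. apply cos_decreasing_1; lra. }
  set (r := (B - t) / sin t).
  assert (Hr : r * sin t = B - t) by (unfold r; field; lra).
  assert (2 * A + 1 < r) by nra.
  pose proof (ln_le_sub_1 (/ r)) as Hln. rewrite ln_Rinv in Hln by lra.
  replace (Phi B t) with (r * cos t + ln r) by (unfold Phi, r; field; lra).
  assert (0 < ln r) by (rewrite <- ln_1; apply ln_increasing; lra).
  nra.
Qed.

(* For B > 2 pi / 3 take t = 2 pi / 3, where cos t = -1/2; otherwise take t = 3B/4,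
   where (B - t) / sin t <= 1. *)
Lemma Phi_le_1_somewhere B : 0 < B ->
  exists t, Rmin (PI / 3) (B / 2) < t < PI /\ t < B /\ Phi B t <= 1.
Proof.
  intros HB. pose proof PI_RGT_0. pose proof PI_4.
  assert (Hmin : Rmin (PI / 3) (B / 2) <= PI / 3 /\ Rmin (PI / 3) (B / 2) <= B / 2)
    by (split; [apply Rmin_l | apply Rmin_r]).
  destruct (Rlt_le_dec (2 * PI / 3) B) as [HBb | HBb].
  - exists (2 * PI / 3). repeat split; try lra.
    assert (Hc : cos (2 * PI / 3) = - (1 / 2)).
    { replace (2 * PI / 3) with (PI - PI / 3) by field.
      now rewrite Rtrigo_facts.cos_pi_minus, cos_PI3. }
    assert (Hs : 0 < sin (2 * PI / 3)) by (apply sin_gt_0; lra).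
    set (r := (B - 2 * PI / 3) / sin (2 * PI / 3)).
    assert (Hr : 0 < r) by (apply Rdiv_lt_0_compat; lra).
    replace (Phi B (2 * PI / 3)) with (r * cos (2 * PI / 3) + ln r) by (unfold Phi, r; field; lra).
    pose proof (ln_le_sub_1 (r / 2) ltac:(lra)) as H1. rewrite ln_div in H1 by lra.
    pose proof (ln_le_sub_1 2 ltac:(lra)). rewrite Hc. lra.
  - exists (3 * B / 4). repeat split; try lra.
    assert (Hs : B / 4 <= sin (3 * B / 4)) by (pose proof (sin_ge_third (3 * B / 4)); lra).
    set (r := (B - 3 * B / 4) / sin (3 * B / 4)).
    assert (Hr : 0 < r <= 1).
    { unfold r. split; [apply Rdiv_lt_0_compat; lra |].
      apply (Rmult_le_reg_r (sin (3 * B / 4))); [lra |].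
      unfold Rdiv. rewrite Rmult_assoc, Rinv_l by lra. lra. }
    replace (Phi B (3 * B / 4)) with (r * cos (3 * B / 4) + ln r) by (unfold Phi, r; field; lra).
    assert (ln r <= 0) by (rewrite <- ln_1; apply ln_le; lra).
    pose proof (COS_bound (3 * B / 4)). nra.
Qed.

Lemma Phi_root_exists A B : 1 < A -> 0 < B -> exists t, 0 < t < PI /\ t < B /\ Phi B t = A.
Proof.
  intros HA HB.
  destruct (Phi_gt_near_0 A B HA HB) as [t1 [Ht1 [Ht1B HP1]]].
  destruct (Phi_le_1_somewhere B HB) as [t2 [Ht2 [Ht2B HP2]]].
  assert (t1 < t2) by (unfold Rmin in Ht2; destruct Rle_dec; lra).
  destruct (Ranalysis5.IVT_interv (fun t => A - Phi B t) t1 t2) as [t [Ht Hf]]; try lra.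
  - intros a Ha. assert (0 < sin a) by (apply sin_gt_0; lra).
    apply continuity_pt_minus; [now apply continuity_pt_const |].
    apply (is_derive_continuity_pt _ _ (dPhi B a)), Phi_derive; lra.
  - exists t. repeat split; lra.
Qed.

Lemma pos_real_root_exists A : 1 < A -> exists r, 0 < r /\ r + ln r = A.
Proof.
  intros HA.
  destruct (Ranalysis5.IVT_interv (fun r => r + ln r - A) 1 A) as [r [Hr Hf]]; try lra.
  - intros a Ha. apply (is_derive_continuity_pt _ _ (1 + / a)).
    auto_derive; [lra | ring].
  - rewrite ln_1. lra.
  - assert (0 < ln A) by (rewrite <- ln_1; apply ln_increasing; lra). lra.
  - exists r. split; lra.
Qed.

Lemma log_lambert_exists A B : 1 < A -> exists w, log_lambert A B w.
Proof.
  intros HA. destruct (Rtotal_order B 0) as [HB | [-> | HB]].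
  - destruct (Phi_root_exists A (- B) HA ltac:(lra)) as [t [Ht [HtB <-]]].
    exists (Cconj ((- B - t) * cos t / sin t, - B - t)).
    rewrite <- (Ropp_involutive B) at 2.
    apply log_lambert_conj; [exact HA |].
    now apply log_lambert_Phi.
  - destruct (pos_real_root_exists A HA) as [r [Hr <-]].
    exists (RtoC r). now apply log_lambert_pos_real.
  - destruct (Phi_root_exists A B HA HB) as [t [Ht [HtB <-]]].
    exists ((B - t) * cos t / sin t, B - t). now apply log_lambert_Phi.
Qed.

Lemma log_lambert_continuous_0 A0 w0 : 1 < A0 -> log_lambert A0 0 w0 ->
  forall eps, 0 < eps ->
  locally_2d (fun A B => forall w, log_lambert A B w -> Cmod (w - w0) < eps) A0 0.
Proof.
  intros HA0 HS0 eps Heps.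
  destruct (log_lambert_0_inv A0 HA0 w0 HS0) as [Ew0 Hr0].
  assert (Hr0p : 0 < Cmod w0) by apply HS0.
  set (del := Rmin (Rmin (1 / 2) (A0 - 1)) (eps / (3 * A0 + 5))).
  assert (Hdel : 0 < del /\ del <= 1 / 2 /\ del <= A0 - 1 /\ del <= eps / (3 * A0 + 5)).
  { assert (0 < eps / (3 * A0 + 5)) by (apply Rdiv_lt_0_compat; lra).
    unfold del, Rmin. repeat destruct Rle_dec; lra. }
  assert (Hdel_eps : (3 * A0 + 4) * del < eps).
  { destruct Hdel as [Hd [_ [_ Hde]]]. apply (Rmult_le_compat_l (3 * A0 + 5)) in Hde; [| lra].
    replace ((3 * A0 + 5) * (eps / (3 * A0 + 5))) with eps in Hde by (field; lra). lra. }
  eapply locally_2d_impl; [| apply (locally_2d_ball A0 0 del); lra].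
  apply locally_2d_forall. intros A B [HA HB] w HS. rewrite Rminus_0_r in HB.
  pose proof HA as HA'. apply Rabs_lt_between' in HA'.
  rewrite Ew0. eapply Rle_lt_trans; [apply (log_lambert_near_pos_real A ltac:(lra) B); auto; lra |].
  rewrite Hr0. pose proof (Rabs_pos B). nra.
Qed.

(* For B near B0, Phi B (t0 - e) > A > Phi B (t0 + e), and monotonicity traps the root. *)
Lemma Phi_root_continuous A0 B0 t0 : 0 < t0 < PI -> t0 < B0 -> Phi B0 t0 = A0 ->
  forall eta, 0 < eta -> locally_2d (fun A B => forall t,
    0 < t < PI -> t < B -> Phi B t = A -> Rabs (t - t0) < eta) A0 B0.
Proof.
  intros Ht0 HtB0 HP0 eta Heta.
  set (e := Rmin (Rmin eta (t0 / 2)) (Rmin ((PI - t0) / 2) ((B0 - t0) / 2))).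
  assert (He : 0 < e /\ e <= eta /\ e <= t0 / 2 /\ e <= (PI - t0) / 2 /\ e <= (B0 - t0) / 2)
    by (unfold e, Rmin; repeat destruct Rle_dec; lra).
  set (p := t0 - e). set (q := t0 + e).
  assert (Hsp : 0 < sin p) by (apply sin_gt_0; unfold p; lra).
  assert (Hsq : 0 < sin q) by (apply sin_gt_0; unfold q; lra).
  assert (Hp : A0 < Phi B0 p) by (rewrite <- HP0; apply Phi_decreasing; unfold p; lra).
  assert (Hq : Phi B0 q < A0) by (rewrite <- HP0; apply Phi_decreasing; unfold q; lra).
  set (g := Rmin (Phi B0 p - A0) (A0 - Phi B0 q)).
  assert (Hg : 0 < g /\ g <= Phi B0 p - A0 /\ g <= A0 - Phi B0 q)
    by (unfold g, Rmin; destruct Rle_dec; lra).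
  destruct (continuity_pt_eps _ _ (Phi_continuous_in_B p B0 Hsp ltac:(unfold p; lra)) (g / 2))
    as [dp [Hdp Hdp']]; [lra |].
  destruct (continuity_pt_eps _ _ (Phi_continuous_in_B q B0 Hsq ltac:(unfold q; lra)) (g / 2))
    as [dq [Hdq Hdq']]; [lra |].
  set (del := Rmin (Rmin (g / 2) (B0 - q)) (Rmin dp dq)).
  assert (Hdel : 0 < del /\ del <= g / 2 /\ del <= B0 - q /\ del <= dp /\ del <= dq)
    by (unfold del, Rmin, q; repeat destruct Rle_dec; lra).
  eapply locally_2d_impl; [| apply (locally_2d_ball A0 B0 del); lra].
  apply locally_2d_forall. intros A B [HA HB] t Ht HtB HPt.
  specialize (Hdp' B ltac:(lra)). specialize (Hdq' B ltac:(lra)).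
  apply Rabs_lt_between' in HA, HB, Hdp', Hdq'.
  apply Rabs_lt_between'.
  assert (Hpt : p < t).
  { destruct (Rlt_le_dec p t) as [H | [H | H]]; auto.
    - pose proof (Phi_decreasing B t p ltac:(lra) H ltac:(unfold p; lra) ltac:(unfold p, q in *; lra)).
      lra.
    - subst t. lra. }
  assert (Htq : t < q).
  { destruct (Rlt_le_dec t q) as [H | [H | H]]; auto.
    - pose proof (Phi_decreasing B q t ltac:(unfold q; lra) H ltac:(lra) HtB). lra.
    - subst t. lra. }
  unfold p, q in *. lra.
Qed.

Lemma param_re_continuity_2d_pt B0 t0 : 0 < sin t0 ->
  continuity_2d_pt (fun B t => (B - t) * cos t / sin t) B0 t0.
Proof.
  intros Hs.
  apply (continuity_2d_pt_ext (fun B t => (B - t) * (cos t / sin t)));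
    [intros; unfold Rdiv; ring |].
  apply continuity_2d_pt_mult.
  - apply continuity_2d_pt_minus; [apply continuity_2d_pt_id1 | apply continuity_2d_pt_id2].
  - apply (continuity_1d_2d_pt_comp (fun t => cos t / sin t) (fun _ t => t));
      [| apply continuity_2d_pt_id2].
    apply continuity_pt_div; [apply continuity_cos | apply continuity_sin | lra].
Qed.

Lemma log_lambert_continuous_pos A0 B0 w0 : 1 < A0 -> 0 < B0 -> log_lambert A0 B0 w0 ->
  forall eps, 0 < eps ->
  locally_2d (fun A B => forall w, log_lambert A B w -> Cmod (w - w0) < eps) A0 B0.
Proof.
  intros HA0 HB0 HS0 eps Heps.
  destruct (log_lambert_pos_inv A0 HA0 B0 w0 HB0 HS0) as [t0 [Ht0 [Ht0B [HP0 ->]]]].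
  assert (Heps2 : 0 < eps / 2) by lra.
  destruct (param_re_continuity_2d_pt B0 t0 ltac:(apply sin_gt_0; lra) (mkposreal _ Heps2))
    as [d1 Hd1].
  set (eta := Rmin d1 (eps / 4)).
  assert (Heta : 0 < eta /\ eta <= d1 /\ eta <= eps / 4)
    by (pose proof (cond_pos d1); unfold eta, Rmin; destruct Rle_dec; lra).
  pose proof (Phi_root_continuous A0 B0 t0 Ht0 Ht0B HP0 eta (proj1 Heta)) as Hroot.
  set (m := Rmin eta (Rmin (A0 - 1) B0)).
  assert (Hm : 0 < m /\ m <= eta /\ m <= A0 - 1 /\ m <= B0)
    by (unfold m, Rmin; repeat destruct Rle_dec; lra).
  eapply locally_2d_impl;
    [| exact (locally_2d_and _ _ _ _ Hroot (locally_2d_ball A0 B0 m (proj1 Hm)))].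
  apply locally_2d_forall. intros A B [Ht [HA HB]] w HS.
  apply Rabs_lt_between' in HA.
  destruct (log_lambert_pos_inv A ltac:(lra) B w ltac:(apply Rabs_lt_between' in HB; lra) HS)
    as [t [Htt [HtB [HPt ->]]]].
  specialize (Ht t Htt HtB HPt).
  specialize (Hd1 B t ltac:(lra) ltac:(lra)).
  eapply Rle_lt_trans; [apply Cmod_le_re_im |].
  match goal with |- Rabs (Re ?d) + _ < _ => set (dw := d) end.
  replace (Re dw) with ((B - t) * cos t / sin t - (B0 - t0) * cos t0 / sin t0)
    by (unfold Re; simpl; ring).
  replace (Im dw) with ((B - B0) + - (t - t0)) by (unfold Im; simpl; ring).
  pose proof (Rabs_triang (B - B0) (- (t - t0))) as Htri. rewrite Rabs_Ropp in Htri.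
  simpl in Hd1. lra.
Qed.

Lemma log_lambert_continuous A0 B0 w0 : 1 < A0 -> log_lambert A0 B0 w0 ->
  forall eps, 0 < eps ->
  locally_2d (fun A B => forall w, log_lambert A B w -> Cmod (w - w0) < eps) A0 B0.
Proof.
  intros HA0 HS0 eps Heps.
  destruct (Rtotal_order B0 0) as [HB0 | [-> | HB0]].
  - pose proof (log_lambert_continuous_pos A0 (- B0) (Cconj w0) HA0 ltac:(lra)
      (log_lambert_conj A0 HA0 B0 w0 HS0) eps Heps) as Hc.
    apply locally_2d_opp_snd in Hc.
    eapply locally_2d_impl;
      [| apply locally_2d_and; [exact Hc | apply (locally_2d_ball A0 B0 (A0 - 1)); lra]].
    apply locally_2d_forall. intros A B [HcAB [HA _]] w HS.
    apply Rabs_lt_between' in HA.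
    rewrite <- Cmod_conj, Cminus_conj.
    apply HcAB, log_lambert_conj; [lra | exact HS].
  - now apply log_lambert_continuous_0.
  - now apply log_lambert_continuous_pos.
Qed.

Definition C_continuous_within (S : C -> Prop) (f : C -> C) (z0 : C) : Prop :=
  forall eps, 0 < eps -> exists del, 0 < del /\ forall z,
    S z -> Cmod (z - z0) < del -> Cmod (f z - f z0) < eps.

Definition is_C_derive_within (S : C -> Prop) (f : C -> C) (z0 d : C) : Prop :=
  forall eps, 0 < eps -> exists del, 0 < del /\ forall z,
    S z -> Cmod (z - z0) < del -> Cmod (f z - f z0 - (z - z0) * d) <= eps * Cmod (z - z0).

Lemma is_derive_of_within_all f z0 d :
  is_C_derive_within (fun _ => True) f z0 d ->
  is_derive (K := C_AbsRing) (V := C_NormedModule) f z0 d.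
Proof.
  intros H. split; [apply is_linear_scal_l |].
  intros x Hx.
  apply (is_filter_lim_locally_unique (K := C_AbsRing) (V := AbsRing_NormedModule C_AbsRing)) in Hx.
  subst x. intros eps.
  apply (locally_le_locally_norm (K := C_AbsRing) (V := AbsRing_NormedModule C_AbsRing)).
  destruct (H eps (cond_pos eps)) as [del [Hdel Hz]].
  exists (mkposreal del Hdel). intros y Hy. now apply Hz.
Qed.

Lemma prod_norm_Cmod (c : C) :
  norm (K := R_AbsRing) (V := prod_NormedModule R_AbsRing R_NormedModule R_NormedModule) c = Cmod c.
Proof.
  destruct c as [a b]. unfold Cmod, norm; simpl. unfold prod_norm, norm; simpl. unfold abs; simpl.
  now rewrite !Rmult_1_r, <- !Rabs_mult, !Rabs_pos_eq by apply Rle_0_sqr.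
Qed.

Lemma is_derive_of_within_line S f z0 d r : 0 < r -> (forall t : R, Rabs t < r -> S (z0 + t)%C) ->
  is_C_derive_within S f z0 d ->
  is_derive (K := R_AbsRing) (fun t : R => f (z0 + t)%C) 0 d.
Proof.
  intros Hr HS H. split; [apply is_linear_scal_l |].
  intros x Hx.
  apply (is_filter_lim_locally_unique (K := R_AbsRing) (V := AbsRing_NormedModule R_AbsRing)) in Hx.
  subst x. intros eps.
  apply (locally_le_locally_norm (K := R_AbsRing) (V := AbsRing_NormedModule R_AbsRing)).
  destruct (H eps (cond_pos eps)) as [del [Hdel Hz]].
  exists (mkposreal (Rmin del r) (Rmin_glb_lt _ _ _ Hdel Hr)).
  intros t Ht. unfold ball_norm in Ht. simpl in Ht.
  assert (Et : norm (minus t 0) = Rabs t) by (change (Rabs (t + - 0) = Rabs t); f_equal; ring).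
  rewrite Et in Ht |- *.
  pose proof (Rmin_l del r). pose proof (Rmin_r del r).
  replace (z0 + RtoC 0)%C with z0 by (unfold Cplus, RtoC; destruct z0; simpl; f_equal; ring).
  specialize (Hz (z0 + t)%C (HS t ltac:(lra))).
  replace (z0 + t - z0)%C with (RtoC t) in Hz by ring. rewrite Cmod_R in Hz.
  eapply Rle_trans; [| apply Hz; lra]. right.
  rewrite <- (prod_norm_Cmod (f (z0 + t)%C - f z0 - t * d)). f_equal.
  destruct (f z0) as [a b], (f (z0 + t)%C) as [a' b'], d as [d1 d2].
  unfold Cminus, Cplus, Copp, Cmult, RtoC, minus, plus, opp, scal, zero; simpl.
  unfold prod_plus, prod_opp, prod_scal, plus, opp, scal, mult; simpl. unfold mult; simpl.
  f_equal; ring.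
Qed.

Lemma is_C_derive_mul_Cexp w0 :
  is_C_derive_within (fun _ => True) (fun w => w * Cexp w)%C w0 ((1 + w0) * Cexp w0)%C.
Proof.
  intros eps Heps.
  set (K := exp (Re w0) * (8 * Cmod w0 + 9)).
  assert (HK : 0 < K) by (pose proof (exp_pos (Re w0)); pose proof (Cmod_ge_0 w0); unfold K; nra).
  exists (Rmin 1 (eps / K)). split; [apply Rmin_glb_lt; [lra | now apply Rdiv_lt_0_compat] |].
  intros w _ Hw. set (u := (w - w0)%C) in *.
  assert (Hu : Cmod u <= 1 /\ K * Cmod u <= eps).
  { pose proof (Rmin_l 1 (eps / K)). pose proof (Rmin_r 1 (eps / K)). split; [lra |].
    apply (Rmult_le_reg_r (/ K)); [now apply Rinv_0_lt_compat |].
    rewrite Rmult_comm, <- Rmult_assoc, Rinv_l, Rmult_1_l by lra. unfold Rdiv in *. lra. }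
  replace (w * Cexp w - w0 * Cexp w0 - u * ((1 + w0) * Cexp w0))%C
    with (Cexp w0 * ((w0 + u) * (Cexp u - 1 - u) + u * u))%C
    by (replace w with (w0 + u)%C by (unfold u; ring); rewrite Cexp_add; ring).
  rewrite Cmod_mult, Cmod_Cexp.
  assert (Hrem : Cmod ((w0 + u) * (Cexp u - 1 - u) + u * u) <= (8 * Cmod w0 + 9) * Cmod u ^ 2).
  { eapply Rle_trans; [apply Cmod_triangle |]. rewrite !Cmod_mult.
    pose proof (Cexp_sub_1_sub_le u (proj1 Hu)).
    pose proof (Cmod_triangle w0 u). pose proof (Cmod_ge_0 u). pose proof (Cmod_ge_0 w0).
    pose proof (Cmod_ge_0 (Cexp u - 1 - u)).
    assert (Cmod (w0 + u) * Cmod (Cexp u - 1 - u) <= (Cmod w0 + 1) * (8 * Cmod u ^ 2))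
      by (apply Rmult_le_compat; auto using Cmod_ge_0; lra).
    nra. }
  pose proof (exp_pos (Re w0)). pose proof (Cmod_ge_0 u).
  apply Rle_trans with (K * Cmod u * Cmod u); [unfold K; nra |].
  apply Rmult_le_compat_r; lra.
Qed.

(* With h = z - z0 and v = g z - g z0, h = v d + o(v) gives |v| <= 2 |h| / |d|,
   hence v - h / d = o(h). *)
Lemma is_C_derive_within_inverse S f g z0 d :
  is_C_derive_within (fun _ => True) f (g z0) d -> d <> 0 ->
  f (g z0) = z0 ->
  (exists r, 0 < r /\ forall z, S z -> Cmod (z - z0) < r -> f (g z) = z) ->
  C_continuous_within S g z0 ->
  is_C_derive_within S g z0 (/ d).
Proof.
  intros Hf Hd Hz0 [r [Hr Hinv]] Hg eps Heps.
  set (c := Cmod d). assert (Hc : 0 < c) by now apply Cmod_gt_0.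
  set (e := Rmin (c / 2) (eps * c ^ 2 / 2)).
  assert (He : 0 < e /\ e <= c / 2 /\ e <= eps * c ^ 2 / 2).
  { assert (0 < eps * c ^ 2 / 2) by (pose proof (pow_lt c 2 Hc); nra).
    unfold e, Rmin. destruct Rle_dec; lra. }
  destruct (Hf e (proj1 He)) as [d1 [Hd1 Hf1]].
  destruct (Hg d1 Hd1) as [del [Hdel Hg1]].
  exists (Rmin del r). split; [now apply Rmin_glb_lt |]. intros z HS Hz.
  pose proof (Rmin_l del r). pose proof (Rmin_r del r).
  specialize (Hf1 (g z) I (Hg1 z HS ltac:(lra))). rewrite Hinv, Hz0 in Hf1 by (auto; lra).
  set (v := (g z - g z0)%C) in *. set (h := (z - z0)%C) in *.
  replace (v - h * / d)%C with (- ((h - v * d) / d))%C by (field; exact Hd).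
  rewrite Cmod_opp, Cmod_div by exact Hd. fold c.
  assert (Hv : Cmod v * c <= Cmod h + e * Cmod v).
  { unfold c. rewrite <- Cmod_mult. replace (v * d)%C with (h - (h - v * d))%C by ring.
    eapply Rle_trans; [apply Cmod_triangle |]. rewrite Cmod_opp. lra. }
  pose proof (Cmod_ge_0 v). pose proof (Cmod_ge_0 h).
  assert (Hv2 : Cmod v * c <= 2 * Cmod h) by nra.
  apply (Rmult_le_reg_r c); [exact Hc |].
  unfold Rdiv. rewrite Rmult_assoc, Rinv_l, Rmult_1_r by lra.
  apply Rle_trans with (e * Cmod v); [exact Hf1 |].
  apply (Rmult_le_reg_r c); [exact Hc |]. nra.
Qed.

Lemma W0R_spec x : exp 1 < x -> -1 <= W0R x /\ W0R x * exp (W0R x) = x.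
Proof.
  intros Hx. unfold W0R. apply epsilon_spec. pose proof (exp_pos 1).
  destruct (IVT (fun w => w * exp w - x) 1 x) as [w [Hw Hf]].
  - intros t. apply (is_derive_continuity_pt _ _ (1 * exp t + t * exp t - 0)).
    auto_derive; auto. ring.
  - pose proof (exp_ineq1_le 1). lra.
  - rewrite Rmult_1_l. lra.
  - assert (1 < exp x) by (rewrite <- exp_0; apply exp_increasing; lra). nra.
  - exists w. split; lra.
Qed.

Lemma W0R_gt_1 x : exp 1 < x -> 1 < W0R x.
Proof.
  intros Hx. destruct (W0R_spec x Hx) as [H1 H2].
  destruct (Rlt_le_dec 1 (W0R x)) as [H | [H | H]]; auto; exfalso.
  - destruct (Rlt_le_dec (W0R x) 0).
    + pose proof (exp_pos (W0R x)). pose proof (exp_pos 1). nra.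
    + pose proof (id_mul_exp_increasing (W0R x) 1 r H). lra.
  - rewrite H, Rmult_1_l in H2. lra.
Qed.

Lemma W0R_le_Cmod w : exp 1 < Cmod (w * Cexp w) -> W0R (Cmod (w * Cexp w)) <= Cmod w.
Proof.
  intros Hz. destruct (W0R_spec _ Hz) as [_ HW]. pose proof (W0R_gt_1 _ Hz).
  rewrite Cmod_mult, Cmod_Cexp in HW |- *. set (W := W0R _) in *.
  destruct (Rle_lt_dec W (Cmod w)) as [H' | H']; auto. exfalso.
  pose proof (id_mul_exp_increasing (Cmod w) W (Cmod_ge_0 w) H').
  assert (exp (Re w) <= exp (Cmod w)).
  { pose proof (re_le_Cmod w). pose proof (Rle_abs (Re w)).
    destruct (Req_dec (Re w) (Cmod w)) as [-> | Hne]; [lra |]. left. apply exp_increasing. lra. }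
  pose proof (Cmod_ge_0 w). nra.
Qed.

Lemma lambert_derivative_neq_0 w : exp 1 < Cmod (w * Cexp w) -> ((1 + w) * Cexp w)%C <> 0.
Proof.
  intros Hz. pose proof (W0R_le_Cmod w Hz). pose proof (W0R_gt_1 _ Hz).
  pose proof (Cmod_1_plus_ge w). pose proof (exp_pos (Re w)).
  apply Cmod_gt_0. rewrite Cmod_mult, Cmod_Cexp. nra.
Qed.

Lemma Cmod_inv_lambert_derivative_le w : exp 1 < Cmod (w * Cexp w) ->
  Cmod (/ ((1 + w) * Cexp w)) <=
    / Cmod (w * Cexp w) * (W0R (Cmod (w * Cexp w)) / (W0R (Cmod (w * Cexp w)) - 1)).
Proof.
  intros Hz. pose proof (W0R_le_Cmod w Hz) as Hle. pose proof (W0R_gt_1 _ Hz) as HW1.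
  set (W := W0R _) in *.
  pose proof (Cmod_1_plus_ge w) as Hq.
  rewrite Cmod_inv by now apply lambert_derivative_neq_0. rewrite !Cmod_mult, Cmod_Cexp.
  set (q := Cmod (1 + w)) in *. set (r := Cmod w) in *. pose proof (exp_pos (Re w)) as HX.
  set (X := exp (Re w)) in *.
  replace (/ (r * X) * (W / (W - 1))) with (/ ((W - 1) * r * X / W)) by (field; repeat split; lra).
  apply Rinv_le_contravar.
  - apply Rdiv_lt_0_compat; [| lra]. apply Rmult_lt_0_compat; [| lra]. apply Rmult_lt_0_compat; lra.
  - apply (Rmult_le_reg_r W); [lra |]. unfold Rdiv. rewrite Rmult_assoc, Rinv_l, Rmult_1_r by lra.
    assert ((W - 1) * r <= q * W) by nra. nra.
Qed.

Lemma LambertW_log_lambert k z b : exp 1 < Cmod z -> is_Arg z b ->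
  log_lambert (ln (Cmod z)) (b + 2 * PI * IZR k) (LambertW k z).
Proof.
  intros Hz Hb. assert (Hz0 : 0 < Cmod z) by (pose proof (exp_pos 1); lra).
  apply (LambertW_rel_iff k z b); auto. unfold LambertW. apply epsilon_spec.
  destruct (log_lambert_exists _ (b + 2 * PI * IZR k) (ln_gt_1 _ Hz)) as [w Hw].
  exists w. now apply (LambertW_rel_iff k z b).
Qed.

Lemma LambertW_spec k z : exp 1 < Cmod z -> (LambertW k z * Cexp (LambertW k z))%C = z.
Proof.
  intros Hz. assert (Hz0 : 0 < Cmod z) by (pose proof (exp_pos 1); lra).
  destruct (is_Arg_exists z Hz0) as [b Hb].
  apply (LambertW_rel_iff k z b (LambertW k z) Hz0 Hb), LambertW_log_lambert; auto.
Qed.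

Lemma LambertW_continuous_within k z b S : exp 1 < Cmod z -> is_Arg z b ->
  Arg_continuous_within S z b -> C_continuous_within S (LambertW k) z.
Proof.
  intros Hz Hb Harg eps Heps. assert (Hz0 : 0 < Cmod z) by (pose proof (exp_pos 1); lra).
  destruct (log_lambert_continuous _ _ _ (ln_gt_1 _ Hz) (LambertW_log_lambert k z b Hz Hb) eps Heps)
    as [d Hd].
  destruct (continuity_pt_eps ln (Cmod z) (is_derive_continuity_pt _ _ _ (is_derive_ln _ Hz0))
    d (cond_pos d)) as [d1 [Hd1 Hln]].
  destruct (Harg d (cond_pos d)) as [d2 [Hd2 HArg]].
  set (del := Rmin (Rmin d1 d2) (Cmod z - exp 1)).
  assert (Hdel : 0 < del /\ del <= d1 /\ del <= d2 /\ del <= Cmod z - exp 1)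
    by (unfold del, Rmin; repeat destruct Rle_dec; lra).
  exists del. split; [lra |]. intros z' HS Hz'.
  pose proof (Cmod_triangle_inv2 z' z) as Htri. apply Rabs_le_between in Htri.
  destruct (HArg z' HS ltac:(lra)) as [b' [Hb' Hbb']].
  apply (Hd (ln (Cmod z')) (b' + 2 * PI * IZR k)).
  - apply Hln. apply Rabs_lt_between'. lra.
  - now replace (b' + 2 * PI * IZR k - (b + 2 * PI * IZR k)) with (b' - b) by ring.
  - apply LambertW_log_lambert; [lra | exact Hb'].
Qed.

Lemma LambertW_derive_within k z b S : exp 1 < Cmod z -> is_Arg z b ->
  Arg_continuous_within S z b ->
  is_C_derive_within S (LambertW k) z (/ ((1 + LambertW k z) * Cexp (LambertW k z))).
Proof.
  intros Hz Hb Harg. pose proof (LambertW_spec k z Hz) as Hw.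
  apply (is_C_derive_within_inverse S (fun w => w * Cexp w)%C); auto.
  - apply is_C_derive_mul_Cexp.
  - apply lambert_derivative_neq_0. now rewrite Hw.
  - exists (Cmod z - exp 1). split; [lra |]. intros z' _ Hz'.
    apply LambertW_spec. pose proof (Cmod_triangle_inv2 z' z) as Htri.
    apply Rabs_le_between in Htri. lra.
  - now apply (LambertW_continuous_within k z b).
Qed.

Theorem theorem4 (k : Z) (z : C) (hz : exp 1 < Cmod z) :
  exists d : C, LambertW_deriv k z d /\
    Cmod d <= / Cmod z * (W0R (Cmod z) / (W0R (Cmod z) - 1)).
Proof.
  assert (Hz0 : 0 < Cmod z) by (pose proof (exp_pos 1); lra).
  exists (/ ((1 + LambertW k z) * Cexp (LambertW k z)))%C. split; [split |].
  - intros [Him Hre].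
    apply (is_derive_of_within_line on_neg_real_axis _ _ _ (- Re z)); [lra | |].
    + intros t Ht. apply Rabs_lt_between in Ht. unfold on_neg_real_axis, Re, Im in *. simpl. lra.
    + apply (LambertW_derive_within k z PI); auto.
      * now apply is_Arg_neg_real.
      * apply Arg_continuous_within_neg_real_axis.
  - intros Hoff. destruct (is_Arg_exists z Hz0) as [b Hb].
    apply is_derive_of_within_all, (LambertW_derive_within k z b); auto.
    apply is_Arg_continuous; auto.
    intros ->. now apply Hoff, is_Arg_PI_on_neg_real_axis.
  - pose proof (Cmod_inv_lambert_derivative_le (LambertW k z)) as Hbound.
    rewrite (LambertW_spec k z hz) in Hbound. exact (Hbound hz).
Qed.
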